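(* Let $\sigma\colon O\to O'$ be an isomorphism of finite $Act$-labelled posets and let $O\rhd c_1$, $O\rhd c_2$ be P-markings. If $O\rhd c_1\sim_C O\rhd c_2$ then $O'\rhd c_1\sigma\sim_C O'\rhd c_2\sigma$.
   Context: Fix a set $Act$ of action labels, an infinite set $\mathcal{E}$ of event names and a net $N=(S,T,F,l)$ (disjoint places $S$ and transitions $T$, $F\subseteq(S\times T)\cup(T\times S)$, $l\colon T\to Act$, ${}^\bullet t=\{s:(s,t)\in F\}$, $t^\bullet=\{s:(t,s)\in F\}$ nonempty). Posets are finite $Act$-labelled posets $O=(X_O,\preccurlyeq_O,l_O)$, $X_O\subseteq\mathcal{E}$; $|O|=\{(x,l_O(x))\}$, $x_a=(x,a)$. Morphisms preserve order and labels ($\sigma(x_a)=\sigma(x)_a$); isomorphisms are bijective morphisms with morphism inverse. $\max_O K$: maximal elements of $K\subseteq|O|$; $K$ down-closed if $y\in K$, $x\preccurlyeq_O y$ imply $x\in K$. Causal markings: finite sets $c$ of pairs $K\vdash s$ ($s\in S$, $K$ finite $\subseteq\mathcal{E}\times Act$); $\mathcal{K}(c)$ union of cause sets, $|c|$ set of places, $K\vdash m=\{K\vdash s:s\in m\}$, $c\sigma=\{\sigma(K)\vdash s\}$. P-marking $O\rhd c$: cause sets are down-closed subsets of $|O|$. $\delta(O,K,e_a)$: $O$ plus event $e\notin X_O$ labelled $a$ above all of $K$, reflexive-transitively closed. Concrete causal case graph: $O\rhd c\cup c'\xrightarrow{K\vdash e_a}\delta(O,K,e_a)\rhd(\mathcal{K}(c)\cup\{e_a\}\vdash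 t^\bullet)\cup c'$ whenever $t\in T$, $O\rhd c\cup c'$ a P-marking, $|c|={}^\bullet t$, $a=l(t)$, $e\in\mathcal{E}\setminus X_O$, $K=\max_O\mathcal{K}(c)$. A concrete causal bisimulation is a family $\{R_O\}$ indexed by posets of relations on P-markings with: $(O_1\rhd c_1,O_2\rhd c_2)\in R_O$ implies $O_1=O_2=O$; if $(O\rhd c_1,O\rhd c_2)\in R_O$ and $O\rhd c_1\xrightarrow{K\vdash e_a}O'\rhd c_1'$ then $O\rhd c_2\xrightarrow{K\vdash e_a}O'\rhd c_2'$ with $(O'\rhd c_1',O'\rhd c_2')\in R_{O'}$, and vice versa. $\sim_C$ is the greatest one. *)

From HB Require Import structures.
From mathcomp Require Import all_boot.
From mathcomp Require Import finmap.
From Stdlib Require Import Relations.Relation_Operators.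

Set Implicit Arguments.
Unset Strict Implicit.
Unset Printing Implicit Defensive.

Local Open Scope fset_scope.

Section CausalBisim.

(* E : event names, Act : action labels, S : places, T : transitions. *)
Variables (E Act S T : choiceType).

(* Finite Act-labelled posets O = (X_O, <=_O, l_O), represented by the *)
(* set of labelled events |O| = {(x, l_O x)} and the order relation.   *)
Record poset := Poset { pev : {fset (E * Act)} ; pord : {fset (E * E)} }.

Definition pX (O : poset) : {fset E} := [fset x.1 | x in pev O].

Definition poset_wf (O : poset) : Prop :=
  (forall x y, x \in pev O -> y \in pev O -> x.1 = y.1 -> x = y) /\
  (forall p, p \in pord O -> p.1 \in pX O /\ p.2 \in pX O) /\
  (forall x, x \in pX O -> (x, x) \in pord O) /\
  (forall x y, (x, y) \in pord O -> (y, x) \in pord O -> x = y) /\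
  (forall x y z, (x, y) \in pord O -> (y, z) \in pord O -> (x, z) \in pord O).

Definition poset_morphism (O O' : poset) (sigma : E -> E) : Prop :=
  (forall x, x \in pev O -> (sigma x.1, x.2) \in pev O') /\
  (forall x y, (x, y) \in pord O -> (sigma x, sigma y) \in pord O').

Definition poset_iso (O O' : poset) (sigma : E -> E) : Prop :=
  exists tau : E -> E,
    poset_morphism O O' sigma /\ poset_morphism O' O tau /\
    (forall x, x \in pX O -> tau (sigma x) = x) /\
    (forall y, y \in pX O' -> sigma (tau y) = y).

Definition causes := {fset (E * Act)}.
Definition cmarking := {fset (causes * S)}.

Definition pmax (O : poset) (K : causes) : causes :=
  [fset y in K | [forall x : K, ((y.1, (val x).1) \in pord O) ==> (val x == y)]].

Definition down_closed (O : poset) (K : causes) : Prop :=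
  (forall x, x \in K -> x \in pev O) /\
  (forall x y, y \in K -> x \in pev O -> (x.1, y.1) \in pord O -> x \in K).

Definition cK (c : cmarking) : causes := \bigcup_(p <- c) (p.1 : causes).

Definition cplaces (c : cmarking) : {fset S} := [fset p.2 | p in c].

Definition cause_places (K : causes) (m : {fset S}) : cmarking :=
  [fset (K, s) | s in m].

Definition cmark_rename (c : cmarking) (sigma : E -> E) : cmarking :=
  [fset ([fset (sigma x.1, x.2) | x in (p.1 : causes)] : causes, p.2) | p in c].

Definition P_marking (O : poset) (c : cmarking) : Prop :=
  poset_wf O /\ forall p, p \in c -> down_closed O p.1.

(* O' = delta(O, K, e_a): O plus a new event e labelled a above all of K,
   with the order being the reflexive-transitive closure. *)
Definition delta_gen (O : poset) (K : causes) (e : E) (x y : E) : Prop :=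
  (x, y) \in pord O \/ (exists k, k \in K /\ x = k.1 /\ y = e).

Definition is_delta (O : poset) (K : causes) (e : E) (a : Act) (O' : poset) : Prop :=
  pev O' = pev O `|` [fset (e, a)] /\
  forall x y, (x, y) \in pord O' <->
    (x \in pX O' /\ y \in pX O' /\ clos_refl_trans E (delta_gen O K e) x y).

(* The net N = (S, T, F, l), F given by presets and postsets.          *)
Variables (pre post : T -> {fset S}) (l : T -> Act).

Definition ccstep (O : poset) (c : cmarking) (K : causes) (e : E) (a : Act)
    (O' : poset) (c' : cmarking) : Prop :=
  P_marking O c /\
  exists (t : T) (c1 c2 : cmarking),
    c = c1 `|` c2 /\ cplaces c1 = pre t /\ a = l t /\ e \notin pX O /\
    K = pmax O (cK c1) /\ is_delta O K e a O' /\
    c' = cause_places (cK c1 `|` [fset (e, a)]) (post t) `|` c2.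

(* concrete causal bisimulation: a family {R_O} of relations on P-markings
   with the same poset O (hence indexed by O) *)
Definition cc_bisim (R : poset -> cmarking -> cmarking -> Prop) : Prop :=
  (forall O c1 c2, R O c1 c2 -> P_marking O c1 /\ P_marking O c2) /\
  (forall O c1 c2, R O c1 c2 ->
     forall K e a O' c1', ccstep O c1 K e a O' c1' ->
       exists c2', ccstep O c2 K e a O' c2' /\ R O' c1' c2') /\
  (forall O c1 c2, R O c1 c2 ->
     forall K e a O' c2', ccstep O c2 K e a O' c2' ->
       exists c1', ccstep O c1 K e a O' c1' /\ R O' c1' c2').

Definition sim_C (O : poset) (c1 c2 : cmarking) : Prop :=
  exists R, cc_bisim R /\ R O c1 c2.

End CausalBisim.

(** The relation that relates [O' |> c1 sigma] and [O' |> c2 sigma] whenever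
    [R] relates [O |> c1] and [O |> c2] and [sigma : O ~= O'] is again a
    concrete causal bisimulation.  A step of [O' |> c1 sigma] firing a fresh
    event [e] is pulled back along [sigma] to a step of [O |> c1] firing an
    event [e0] fresh for [O] (one exists because [E] is infinite); [R] matches
    it by a step of [O |> c2], which is pushed forward along [sigma] extended
    by [e0 |-> e].  The two extended posets are again isomorphic, so the
    resulting markings are related. *)
From HB Require Import structures.
From mathcomp Require Import all_boot.
From mathcomp Require Import finmap.
From Stdlib Require Import Relations.Relation_Operators.

Set Implicit Arguments.
Unset Strict Implicit.
Unset Printing Implicit Defensive.

Local Open Scope fset_scope.

Lemma clos_rt_map (A : Type) (r r' : A -> A -> Prop) (f : A -> A) :
  (forall x y, r x y -> r' (f x) (f y)) ->
  forall x y, clos_refl_trans A r x y -> clos_refl_trans A r' (f x) (f y).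
Proof.
move=> H x y; elim=> [u v /H|u|u v w _ IH1 _ IH2]; first exact: rt_step.
  exact: rt_refl.
exact: rt_trans IH1 IH2.
Qed.

Definition extend_fun (T : eqType) (h : T -> T) (x0 y0 : T) (x : T) : T :=
  if x == x0 then y0 else h x.

Lemma extend_fun_new (T : eqType) (h : T -> T) x0 y0 : extend_fun h x0 y0 x0 = y0.
Proof. by rewrite /extend_fun eqxx. Qed.

Lemma extend_fun_old (T : eqType) (h : T -> T) x0 y0 x :
  x != x0 -> extend_fun h x0 y0 x = h x.
Proof. by rewrite /extend_fun => /negPf ->. Qed.

Lemma extend_fun_notin (T : choiceType) (A : {fset T}) (h : T -> T) x0 y0 x :
  x0 \notin A -> x \in A -> extend_fun h x0 y0 x = h x.
Proof. by move=> x0A xA; apply: extend_fun_old; apply: contraNneq x0A => <-. Qed.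
Arguments extend_fun_notin {T A h x0 y0 x}.

Section Renaming.
Variables (E Act S : choiceType).
Implicit Types (O : poset E Act) (K C : causes E Act) (c : cmarking E Act S).

Definition ren C (f : E -> E) : causes E Act := [fset (f x.1, x.2) | x in C].

Lemma renP C f y : reflect (exists2 x, x \in C & y = (f x.1, x.2)) (y \in ren C f).
Proof. exact: imfsetP. Qed.

Lemma ren_in C f x : x \in C -> (f x.1, x.2) \in ren C f.
Proof. by move=> xC; apply/renP; exists x. Qed.

Lemma renU C1 C2 f : ren (C1 `|` C2) f = ren C1 f `|` ren C2 f.
Proof. exact: imfsetU. Qed.

Lemma ren1 (x : E * Act) f : ren [fset x] f = [fset (f x.1, x.2)].
Proof. exact: imfset_fset1. Qed.

Lemma eq_ren C f f' : (forall x, x \in C -> f x.1 = f' x.1) -> ren C f = ren C f'.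
Proof. by move=> h; apply: eq_in_imfset => x /h /= ->. Qed.

Lemma pXP O x : reflect (exists2 p, p \in pev O & x = p.1) (x \in pX O).
Proof. exact: imfsetP. Qed.

Lemma pX_in O p : p \in pev O -> p.1 \in pX O.
Proof. by move=> pO; apply/pXP; exists p. Qed.

Lemma pmaxP O K y :
  y \in pmax O K <-> y \in K /\ forall x, x \in K -> (y.1, x.1) \in pord O -> x = y.
Proof.
rewrite /pmax in_fset /= inE; split.
  move=> /andP [yK /forallP H]; split=> // x xK hyx.
  by have := H [` xK]; rewrite /= hyx => /eqP.
move=> [yK H]; rewrite yK; apply/forallP => -[x xK] /=.
by apply/implyP => /(H x xK) ->.
Qed.

Lemma cKP c z : reflect (exists2 p, p \in c & z \in p.1) (z \in cK c).
Proof.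
by apply: (iffP (bigfcupP _ _ _ _)) => -[p]; rewrite ?andbT => pc zp; exists p; rewrite ?andbT.
Qed.

Lemma cmark_renameE c f : cmark_rename c f = [fset (ren p.1 f, p.2) | p in c].
Proof. by []. Qed.

Lemma cmark_renameU c1 c2 f :
  cmark_rename (c1 `|` c2) f = cmark_rename c1 f `|` cmark_rename c2 f.
Proof. exact: imfsetU. Qed.

Lemma eq_cmark_rename c f f' :
  (forall p x, p \in c -> x \in p.1 -> f x.1 = f' x.1) ->
  cmark_rename c f = cmark_rename c f'.
Proof.
move=> h; rewrite !cmark_renameE; apply: eq_in_imfset => p /= pc.
by rewrite (@eq_ren p.1 f f') // => x; apply: h.
Qed.

Lemma cK_rename c f : cK (cmark_rename c f) = ren (cK c) f.
Proof.
apply/fsetP => z; apply/cKP/renP.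
  move=> [q /imfsetP [p pc ->] /renP [x xp ->]].
  by exists x => //; apply/cKP; exists p.
move=> [x /cKP [p pc xp] ->]; exists (ren p.1 f, p.2); last exact: ren_in.
by apply/imfsetP; exists p.
Qed.

Lemma cplaces_rename c f : cplaces (cmark_rename c f) = cplaces c.
Proof.
apply/fsetP => s; apply/imfsetP/imfsetP => /= -[p].
  by move=> /imfsetP [q qc ->] ->; exists q.
by move=> pc ->; exists (ren p.1 f, p.2) => //; apply/imfsetP; exists p.
Qed.

Lemma cause_places_rename K (m : {fset S}) f :
  cmark_rename (cause_places K m) f = cause_places (ren K f) m.
Proof.
apply/fsetP => q; apply/imfsetP/imfsetP => /= -[p].
  by move=> /imfsetP [s sm ->] ->; exists s.
by move=> pm ->; exists (K, p) => //; apply/imfsetP; exists p.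
Qed.

(* Renaming is not injective, so a decomposition of the renamed marking is
   pulled back through preimages; they may overlap, which is harmless. *)
Lemma cmark_rename_splitU c f d1 d2 : cmark_rename c f = d1 `|` d2 ->
  exists c1 c2, [/\ c = c1 `|` c2, cmark_rename c1 f = d1 & cmark_rename c2 f = d2].
Proof.
move=> h; pose rp (p : causes E Act * S) := (ren p.1 f, p.2).
have preim d : d `<=` d1 `|` d2 -> cmark_rename [fset p in c | rp p \in d] f = d.
  move=> sd; apply/fsetP => q; apply/imfsetP/idP.
    by move=> [p]; rewrite !inE => /andP [_ ?] ->.
  move=> qd; have := fsubsetP sd q qd; rewrite -h => /imfsetP [p pc eq].
  by exists p => //; rewrite !inE pc /= /rp -eq.
exists [fset p in c | rp p \in d1], [fset p in c | rp p \in d2].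
split; rewrite ?preim ?fsubsetUl ?fsubsetUr //.
apply/fsetP => p; rewrite in_fsetU !inE; case pc: (p \in c) => //=.
by rewrite -in_fsetU -h; apply/esym/imfsetP; exists p.
Qed.

Definition causes_in O c := forall p x, p \in c -> x \in p.1 -> x \in pev O.

Lemma P_marking_causes_in O c : P_marking O c -> causes_in O c.
Proof. by move=> [_ H] p x /H [sub _]; apply: sub. Qed.

Lemma causes_inU O c1 c2 : causes_in O (c1 `|` c2) -> causes_in O c1 /\ causes_in O c2.
Proof. by move=> h; split=> p x pc; apply: h; rewrite in_fsetU pc ?orbT. Qed.

Lemma causes_in_cK O c x : causes_in O c -> x \in cK c -> x \in pev O.
Proof. by move=> h /cKP [p pc xp]; apply: h xp. Qed.

Lemma cmark_rename_fire O f e0 e a d1 d2 (m : {fset S}) :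
  causes_in O d1 -> causes_in O d2 -> e0 \notin pX O ->
  cmark_rename (cause_places (cK d1 `|` [fset (e0, a)]) m `|` d2) (extend_fun f e0 e) =
  cause_places (cK (cmark_rename d1 f) `|` [fset (e, a)]) m `|` cmark_rename d2 f.
Proof.
move=> h1 h2 he0; have old x : x \in pev O -> extend_fun f e0 e x.1 = f x.1.
  by move=> /pX_in; apply: extend_fun_notin.
rewrite cmark_renameU cause_places_rename renU ren1 /= extend_fun_new cK_rename.
congr (cause_places (_ `|` _) _ `|` _).
  by apply: eq_ren => x /(causes_in_cK h1); apply: old.
by apply: eq_cmark_rename => q x qd xq; apply/old/(h2 _ _ qd xq).
Qed.

End Renaming.

Section Isomorphisms.
Variables (E Act S : choiceType).
Implicit Types (O : poset E Act) (C : causes E Act) (c : cmarking E Act S).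

Definition poset_iso_with O O' (f g : E -> E) :=
  [/\ poset_morphism O O' f, poset_morphism O' O g,
      forall x, x \in pX O -> g (f x) = x & forall y, y \in pX O' -> f (g y) = y].

Lemma poset_morphism_pX O O' f x : poset_morphism O O' f -> x \in pX O -> f x \in pX O'.
Proof. by move=> [mev _] /pXP [p pO ->]; apply: pX_in (mev _ pO). Qed.

Lemma pmax_ren O O' f g C : poset_iso_with O O' f g ->
  (forall x, x \in C -> x \in pev O) -> pmax O' (ren C f) = ren (pmax O C) f.
Proof.
move=> [[_ mf] [_ mg] gf _] CO; apply/fsetP => y; apply/idP/idP.
  move=> /pmaxP [/renP [x xC ->] H]; apply: ren_in; apply/pmaxP; split=> // z zC hxz.
  have [e1 e2] := H _ (ren_in f zC) (mf _ _ hxz).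
  have : g (f z.1) = g (f x.1) by rewrite e1.
  rewrite !gf ?pX_in ?CO // => e3.
  by move: e3 e2; case: z {zC hxz e1} => ? ? /= -> ->; case: x {xC H}.
move=> /renP [x /pmaxP [xC H] ->]; apply/pmaxP; split; first exact: ren_in.
move=> z /renP [w wC ->] /= /mg; rewrite !gf ?pX_in ?CO // => hxw.
by rewrite (H _ wC hxw).
Qed.

Lemma P_marking_rename O O' f g c : poset_iso_with O O' f g -> poset_wf O' ->
  P_marking O c -> P_marking O' (cmark_rename c f).
Proof.
move=> [[fev _] [gev gord] gf fg] wf' [_ Hc]; split=> // q /imfsetP [p pc ->] /=.
have [sub down] := Hc p pc; split=> [x /renP [y yp ->]|x y /renP [z zp ->] xO' /= hxz].
  exact/fev/sub.
have hx : (g x.1, x.2) \in pev O by exact: gev.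
move: (gord _ _ hxz); rewrite gf ?pX_in ?sub // => /(down _ _ zp hx) /(ren_in f).
by rewrite /= fg ?(pX_in xO'); case: x {xO' hxz hx}.
Qed.

End Isomorphisms.

Section Extension.
Variables (E Act : choiceType).
Implicit Types (O : poset E Act) (K : causes E Act).

Lemma pX_add_event O O' e a : pev O' = pev O `|` [fset (e, a)] ->
  forall x, (x \in pX O') = (x \in pX O) || (x == e).
Proof.
move=> hev x; apply/pXP/orP.
  rewrite hev => -[p]; rewrite in_fsetU in_fset1 => /orP [pO ->|/eqP -> ->].
    by left; apply: pX_in.
  by right.
move=> [/pXP [p pO ->]|/eqP ->].
  by exists p => //; rewrite hev in_fsetU pO.
by exists (e, a) => //; rewrite hev in_fsetU in_fset1 eqxx orbT.
Qed.

Lemma pX_delta O K e a O' : is_delta O K e a O' ->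
  forall x, (x \in pX O') = (x \in pX O) || (x == e).
Proof. by move=> [hev _]; apply: pX_add_event hev. Qed.

Lemma clos_rt_delta_gen O K e x y : poset_wf O -> e \notin pX O ->
  clos_refl_trans E (delta_gen O K e) x y -> [\/ x = y, (x, y) \in pord O | y = e].
Proof.
move=> [_ [hin [_ [_ htr]]]] eO; elim=> {x y}.
- by move=> x y [h|[k [_ [-> ->]]]]; [apply: Or32 | apply: Or33].
- by move=> x; apply: Or31.
move=> x y z _ [->|hxy|ye] _ [<-|hyz|ze] //; try by [apply: Or31|apply: Or32|apply: Or33].
- by apply: Or32; apply: htr hxy hyz.
- by have [/= hy _] := hin _ hyz; move: eO; rewrite -ye hy.
Qed.

Lemma wf_delta O K e a O' :
  poset_wf O -> e \notin pX O -> is_delta O K e a O' -> poset_wf O'.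
Proof.
move=> wf eO hd; have [hev hord] := hd; have [hl [hin [_ [hanti _]]]] := wf.
have outside x y : (x, y) \in pord O -> x != e /\ y != e.
  by move=> /hin [/= hx hy]; split; apply: contraNneq eO => <-.
split; [|split; [|split; [|split]]].
- move=> x y; rewrite hev !in_fsetU !in_fset1 => /orP [xO|/eqP ->] /orP [yO|/eqP ->] //=.
  + exact: hl.
  + by move=> h; have := pX_in xO; rewrite h /= (negPf eO).
  + by move=> h; have := pX_in yO; rewrite -h /= (negPf eO).
- by move=> [x y] /hord [? [? _]].
- by move=> x xO; apply/hord; do 2!split=> //; apply: rt_refl.
- move=> x y /hord [_ [_ /(clos_rt_delta_gen wf eO) h1]] /hord [_ [_ /(clos_rt_delta_gen wf eO) h2]].
  case: h1 => [//|h1|ye]; case: h2 => [->//|h2|xe].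
  + exact: hanti.
  + by have [/eqP] := outside _ _ h1.
  + by have [/eqP] := outside _ _ h2.
  + by rewrite xe ye.
- move=> x y z /hord [hx [_ h1]] /hord [_ [hz h2]]; apply/hord; do 2!split=> //.
  exact: rt_trans h1 h2.
Qed.

End Extension.

Section Pullback.
Variables (E Act : choiceType) (O0 O1 O1' : poset E Act) (f g : E -> E).
Variables (e0 e : E) (a : Act) (K0 : causes E Act).
Hypotheses (iso : poset_iso_with O0 O1 f g) (wf0 : poset_wf O0) (wf1 : poset_wf O1).
Hypotheses (e0_fresh : e0 \notin pX O0) (e_fresh : e \notin pX O1).
Hypotheses (K0_sub : forall k, k \in K0 -> k \in pev O0)
  (hd : is_delta O1 (ren K0 f) e a O1').

Local Notation f' := (extend_fun f e0 e).
Local Notation g' := (extend_fun g e e0).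

(* The poset [delta(O0, K0, e0_a)], with its order transported back from [O1']. *)
Definition delta_pullback : poset E Act :=
  Poset (pev O0 `|` [fset (e0, a)]) [fset (g' p.1, g' p.2) | p in pord O1'].

Lemma pX_delta_pullback x : (x \in pX delta_pullback) = (x \in pX O0) || (x == e0).
Proof. exact: pX_add_event. Qed.

Lemma extend_funK x : x \in pX delta_pullback -> f' x \in pX O1' /\ g' (f' x) = x.
Proof.
have [mf mg gf _] := iso.
rewrite pX_delta_pullback (pX_delta hd) => /orP [xO|/eqP ->].
  by rewrite !(extend_fun_notin e0_fresh, extend_fun_notin e_fresh,
    poset_morphism_pX mf) ?gf.
by rewrite !extend_fun_new eqxx orbT.
Qed.

Lemma extend_funKV y : y \in pX O1' -> g' y \in pX delta_pullback /\ f' (g' y) = y.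
Proof.
have [mf mg _ fg] := iso.
rewrite pX_delta_pullback (pX_delta hd) => /orP [yO|/eqP ->].
  by rewrite !(extend_fun_notin e_fresh, extend_fun_notin e0_fresh,
    poset_morphism_pX mg) ?fg.
by rewrite !extend_fun_new eqxx orbT.
Qed.

Lemma delta_gen_push x y :
  delta_gen O0 K0 e0 x y -> delta_gen O1 (ren K0 f) e (f' x) (f' y).
Proof.
have [[_ mf] _ _ _] := iso.
case=> [hxy|[k [kK [-> ->]]]].
  have [/= xO yO] := wf0.2.1 _ hxy.
  by left; rewrite !(extend_fun_notin e0_fresh) //; apply: mf.
right; exists (f k.1, k.2); split; first exact: ren_in.
by rewrite extend_fun_new (extend_fun_notin e0_fresh) ?pX_in ?K0_sub.
Qed.

Lemma delta_gen_pull x y :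
  delta_gen O1 (ren K0 f) e x y -> delta_gen O0 K0 e0 (g' x) (g' y).
Proof.
have [mf [_ mg] gf _] := iso.
case=> [hxy|[k [/renP [k0 k0K ->] [-> ->]]]].
  have [/= xO yO] := wf1.2.1 _ hxy.
  by left; rewrite !(extend_fun_notin e_fresh) //; apply: mg.
have k0O := pX_in (K0_sub k0K).
right; exists k0.
by rewrite extend_fun_new (extend_fun_notin e_fresh) ?gf ?(poset_morphism_pX mf).
Qed.

Lemma is_delta_pullback : is_delta O0 K0 e0 a delta_pullback.
Proof.
have [_ hord1] := hd; split=> // x y; split.
  move=> /imfsetP [[y1 y2] /= /hord1 [y1O [y2O hy]] [-> ->]].
  split; first exact: (extend_funKV y1O).1.
  split; first exact: (extend_funKV y2O).1.
  exact: clos_rt_map delta_gen_pull _ _ hy.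
move=> [xO [yO hxy]]; apply/imfsetP; exists (f' x, f' y).
  apply/hord1; split; first exact: (extend_funK xO).1.
  split; first exact: (extend_funK yO).1.
  exact: clos_rt_map delta_gen_push _ _ hxy.
by rewrite /= (extend_funK xO).2 (extend_funK yO).2.
Qed.

Lemma poset_iso_pullback : poset_iso_with delta_pullback O1' f' g'.
Proof.
have [[mf _] [mg _] _ _] := iso; have [hev1 hord1] := hd.
split; [split|split|move=> x /extend_funK []|move=> y /extend_funKV []] => //.
- move=> x; rewrite in_fsetU in_fset1 hev1 in_fsetU => /orP [xO|/eqP ->] /=.
    by rewrite (extend_fun_notin e0_fresh) ?pX_in ?mf.
  by rewrite extend_fun_new in_fset1 eqxx orbT.
- move=> x y /imfsetP [[y1 y2] /= hy [-> ->]].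
  have [y1O [y2O _]] := (hord1 _ _).1 hy.
  by rewrite (extend_funKV y1O).2 (extend_funKV y2O).2.
- move=> y; rewrite hev1 in_fsetU in_fset1 => /orP [yO|/eqP ->]; rewrite /= in_fsetU.
    by rewrite (extend_fun_notin e_fresh) ?pX_in ?mg.
  by rewrite extend_fun_new in_fset1 eqxx orbT.
- by move=> x y h; apply/imfsetP; exists (x, y).
Qed.

End Pullback.

Section Steps.
Variables (E Act S T : choiceType).
Hypothesis E_infinite : forall s : {fset E}, exists e : E, e \notin s.
Variables (pre post : T -> {fset S}) (l : T -> Act).
Implicit Types (O : poset E Act) (K : causes E Act) (c : cmarking E Act S).

Local Notation ccstep := (ccstep pre post l).

Lemma ccstep_delta O c K e a O' c' :
  ccstep O c K e a O' c' -> e \notin pX O /\ is_delta O K e a O'.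
Proof. by move=> [_ [t [c1 [c2 [_ [_ [_ [he [_ [hd _]]]]]]]]]]. Qed.

Lemma ccstep_rename O0 O1 O0' O1' f g c K0 e0 e a c' :
  poset_iso_with O0 O1 f g -> poset_wf O1 -> is_delta O1 (ren K0 f) e a O1' ->
  e \notin pX O1 -> ccstep O0 c K0 e0 a O0' c' ->
  ccstep O1 (cmark_rename c f) (ren K0 f) e a O1'
    (cmark_rename c' (extend_fun f e0 e)).
Proof.
move=> iso wf1 hd he [Pc [t [d1 [d2 [hs [hpre [ha [he0 [hK [_ hc']]]]]]]]]].
have [ci1 ci2] : causes_in O0 d1 /\ causes_in O0 d2.
  by apply: causes_inU; rewrite -hs; apply: P_marking_causes_in.
split; first exact: P_marking_rename iso wf1 Pc.
exists t, (cmark_rename d1 f), (cmark_rename d2 f).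
rewrite hs cmark_renameU cplaces_rename hc' (cmark_rename_fire _ _ _ _ ci1 ci2) //.
do !split=> //.
by rewrite hK cK_rename (pmax_ren iso) // => x /(causes_in_cK ci1).
Qed.

Lemma ccstep_unrename O0 O1 O1' f g c K e a c' :
  poset_iso_with O0 O1 f g -> P_marking O0 c -> poset_wf O1 ->
  ccstep O1 (cmark_rename c f) K e a O1' c' ->
  exists e0 K0 O0' c0', [/\ ccstep O0 c K0 e0 a O0' c0', K = ren K0 f,
    poset_iso_with O0' O1' (extend_fun f e0 e) (extend_fun g e e0),
    poset_wf O1' & c' = cmark_rename c0' (extend_fun f e0 e)].
Proof.
move=> iso Pc wf1 st; have [he hd] := ccstep_delta st.
move: st => [_ [t [d1 [d2 [hs [hpre [ha [_ [hK [_ hc']]]]]]]]]].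
have [c1 [c2 [hc hc1 hc2]]] := cmark_rename_splitU hs.
have [ci1 ci2] : causes_in O0 c1 /\ causes_in O0 c2.
  by apply: causes_inU; rewrite -hc; apply: P_marking_causes_in.
have [e0 he0] := E_infinite (pX O0).
pose K0 := pmax O0 (cK c1).
have K0_sub k : k \in K0 -> k \in pev O0.
  by move=> /pmaxP [/(causes_in_cK ci1)].
have hK0 : K = ren K0 f.
  by rewrite hK -hc1 cK_rename (pmax_ren iso) // => x /(causes_in_cK ci1).
rewrite hK0 in hd.
have hd0 := is_delta_pullback iso Pc.1 wf1 he0 he K0_sub hd.
exists e0, K0, (delta_pullback O0 O1' g e0 e a),
  (cause_places (cK c1 `|` [fset (e0, a)]) (post t) `|` c2); split=> //.
- split=> //; exists t, c1, c2; rewrite -(cplaces_rename c1 f) hc1.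
  by do 6!split=> //.
- exact: poset_iso_pullback iso he0 he hd.
- exact: wf_delta wf1 he hd.
- by rewrite hc' -hc1 -hc2 (cmark_rename_fire _ _ _ _ ci1 ci2).
Qed.

End Steps.

Section IsoImage.
Variables (E Act S T : choiceType).
Hypothesis E_infinite : forall s : {fset E}, exists e : E, e \notin s.
Variables (pre post : T -> {fset S}) (l : T -> Act).

Local Notation ccstep := (ccstep pre post l).
Local Notation cc_bisim := (@cc_bisim E Act S T pre post l).
Local Notation relation := (poset E Act -> cmarking E Act S -> cmarking E Act S -> Prop).

Definition iso_image (R : relation) : relation := fun O' c1' c2' =>
  poset_wf O' /\ exists O f g c1 c2, [/\ R O c1 c2, poset_iso_with O O' f g,
    c1' = cmark_rename c1 f & c2' = cmark_rename c2 f].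

Lemma cc_bisim_converse R : cc_bisim R -> cc_bisim (fun O c1 c2 => R O c2 c1).
Proof.
move=> [B1 [B2 B3]]; split; first by move=> O c1 c2 /B1 [].
split=> O c1 c2 h K e a O' c' st.
  by have [c'' ?] := B3 _ _ _ h _ _ _ _ _ st; exists c''.
by have [c'' ?] := B2 _ _ _ h _ _ _ _ _ st; exists c''.
Qed.

Lemma iso_image_step R : cc_bisim R ->
  forall O O' f g c1 c2, R O c1 c2 -> poset_iso_with O O' f g -> poset_wf O' ->
  forall K e a O'' c1', ccstep O' (cmark_rename c1 f) K e a O'' c1' ->
  exists c2', ccstep O' (cmark_rename c2 f) K e a O'' c2' /\ iso_image R O'' c1' c2'.
Proof.
move=> [B1 [B2 _]] O O' f g c1 c2 HR iso wf' K e a O'' c1' st.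
have [Pc1 _] := B1 _ _ _ HR.
have [he hd] := ccstep_delta st.
have [e0 [K0 [O0' [c10' [st0 hK iso' wf'' ->]]]]] :=
  ccstep_unrename E_infinite iso Pc1 wf' st.
rewrite hK in hd *.
have [c20' [st0' HR']] := B2 _ _ _ HR _ _ _ _ _ st0.
exists (cmark_rename c20' (extend_fun f e0 e)); split.
  exact: ccstep_rename iso wf' hd he st0'.
by split=> //; exists O0', (extend_fun f e0 e), (extend_fun g e e0), c10', c20'.
Qed.

Lemma iso_image_bisim R : cc_bisim R -> cc_bisim (iso_image R).
Proof.
move=> HB; have [B1 _] := HB; split; [|split].
- move=> O' _ _ [wf' [O [f [g [c1 [c2 [HR iso -> ->]]]]]]].
  by have [P1 P2] := B1 _ _ _ HR; split; apply: P_marking_rename iso wf' _.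
- move=> O' _ _ [wf' [O [f [g [c1 [c2 [HR iso -> ->]]]]]]] K e a O'' c' st.
  exact: (iso_image_step HB HR iso wf' st).
- move=> O' _ _ [wf' [O [f [g [c1 [c2 [HR iso -> ->]]]]]]] K e a O'' c' st.
  have [c'' [st' [wf'' [O0 [f0 [g0 [d1 [d2 [HR' iso' h1 h2]]]]]]]]] :=
    iso_image_step (cc_bisim_converse HB) HR iso wf' st.
  by exists c''; split=> //; split=> //; exists O0, f0, g0, d2, d1.
Qed.

End IsoImage.

Theorem lemma6 (E Act S T : choiceType)
    (E_infinite : forall s : {fset E}, exists e : E, e \notin s)
    (pre post : T -> {fset S}) (l : T -> Act)
    (post_nonempty : forall t : T, post t != fset0)
    (O O' : poset E Act) (sigma : E -> E)
    (HO : poset_wf O) (HO' : poset_wf O')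
    (Hsigma : poset_iso O O' sigma)
    (c1 c2 : cmarking E Act S)
    (Hc1 : P_marking O c1) (Hc2 : P_marking O c2) :
  sim_C pre post l O c1 c2 ->
  sim_C pre post l O' (cmark_rename c1 sigma) (cmark_rename c2 sigma).
Proof.
move=> [R [HB HR]]; have [tau [m1 [m2 [h1 h2]]]] := Hsigma.
exists (iso_image R); split; first exact: iso_image_bisim.
by split=> //; exists O, sigma, tau, c1, c2.
Qed.
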